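(* Let $m_{11},m_{12},m_{13},l_1,l_2\in k$ with $(m_{11},m_{12},m_{13})\neq0$, $m_{12}l_1^2+m_{13}l_2^2=m_{11}$, $l_1=0$ and $l_2\neq0$, and let $M=\begin{pmatrix}m_{11}&m_{12}&m_{13}\\ l_1m_{11}&l_1m_{12}&l_1m_{13}\\ l_2m_{11}&l_2m_{12}&l_2m_{13}\end{pmatrix}$. Then: (1) if $m_{12}\neq0$ and $m_{13}\neq0$, then $\mathcal{A}_{\mathcal{O}_{-1}(k^3)}(M)\cong\mathcal{A}_{\mathcal{O}_{-1}(k^3)}(E_{11}+E_{12}+E_{13}+E_{31}+E_{32}+E_{33})$; (2) if $m_{12}=0$ and $m_{13}\neq0$, then $\mathcal{A}_{\mathcal{O}_{-1}(k^3)}(M)\cong\mathcal{A}_{\mathcal{O}_{-1}(k^3)}(E_{11}+E_{13}+E_{31}+E_{33})$; (3) if $m_{12}\neq0$ and $m_{13}=0$, then $\mathcal{A}_{\mathcal{O}_{-1}(k^3)}(M)\cong\mathcal{A}_{\mathcal{O}_{-1}(k^3)}(E_{12}+E_{32})$.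
   Context: $k$ is an algebraically closed field of characteristic zero. $E_{ij}$ denotes the $3\times3$ matrix unit with $1$ in position $(i,j)$. For $M=(m_{ij})\in M_3(k)$, $\mathcal{A}_{\mathcal{O}_{-1}(k^3)}(M)$ is the connected cochain DG algebra whose underlying graded algebra is generated by degree-one $x_1,x_2,x_3$ subject to $x_ix_j=-x_jx_i$ ($i<j$), with differential determined by $\partial(x_i)=\sum_j m_{ij}x_j^2$ and the Leibniz rule; $\cong$ means isomorphism of DG algebras. *)

From HB Require Import structures.
From mathcomp Require Import all_boot all_order all_algebra.
From mathcomp Require Import mpoly.
Set Implicit Arguments. Unset Strict Implicit. Unset Printing Implicit Defensive.
Import Order.TTheory GRing.Theory.
Local Open Scope ring_scope.

(* The graded algebra O_{-1}(k^3) = k<x1,x2,x3>/(x_i x_j + x_j x_i, i<j) is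
   modelled on the k-vector space {mpoly k[3]}: the monomial 'X_[m] stands for
   the ordered monomial x1^(m 0) x2^(m 1) x3^(m 2), whose (cohomological) degree
   is mdeg m.  The twisted (skew) product of ordered monomials is
     x^m * x^n = (-1)^(sum_{i>j} m_i n_j) x^(m+n),
   extended bilinearly.  (The commutative product of {mpoly} is NOT used as the
   algebra product; it only appears in 'X_j ^+ 2 which is the basis vector x_j^2,
   equal to the skew square of x_j.) *)

Section SkewPoly.
Variable k : fieldType.

Definition sk_i0 : 'I_3 := @Ordinal 3 0 isT.
Definition sk_i1 : 'I_3 := @Ordinal 3 1 isT.
Definition sk_i2 : 'I_3 := @Ordinal 3 2 isT.

Definition skew_sign (m n : 'X_{1..3}) : k :=
  (-1) ^+ (m sk_i1 * n sk_i0 + m sk_i2 * n sk_i0 + m sk_i2 * n sk_i1)%N.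

Definition skew_mul (p q : {mpoly k[3]}) : {mpoly k[3]} :=
  \sum_(m <- msupp p) \sum_(n <- msupp q)
     (p@_m * q@_n * skew_sign m n) *: 'X_[m + n].

Definition is_diff (M : 'M[k]_3) (d : {mpoly k[3]} -> {mpoly k[3]}) : Prop :=
  [/\ forall (a : k) p q, d (a *: p + q) = a *: d p + d q,
      forall i : 'I_3, d 'X_i = \sum_(j < 3) M i j *: 'X_j ^+ 2 &
      forall (n : nat) p q, p \is n.-homog ->
        d (skew_mul p q) = skew_mul (d p) q + (-1) ^+ n *: skew_mul p (d q)].

Definition dg_iso (d d' : {mpoly k[3]} -> {mpoly k[3]}) : Prop :=
  exists f : {mpoly k[3]} -> {mpoly k[3]},
    [/\ (forall (a : k) p q, f (a *: p + q) = a *: f p + f q) /\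
        bijective f,
        forall (n : nat) p, p \is n.-homog -> f p \is n.-homog,
        f 1 = 1,
        forall p q, f (skew_mul p q) = skew_mul (f p) (f q) &
        forall p, f (d p) = d' (f p)].

Definition dg_isomorphic (M N : 'M[k]_3) : Prop :=
  forall d d', is_diff M d -> is_diff N d' -> dg_iso d d'.

Definition Emx (i j : 'I_3) : 'M[k]_3 := delta_mx i j.

End SkewPoly.
Arguments Emx {k}.

From HB Require Import structures.
From mathcomp Require Import all_boot all_order all_algebra.
From mathcomp Require Import mpoly ring.
Set Implicit Arguments. Unset Strict Implicit. Unset Printing Implicit Defensive.
Import Order.TTheory GRing.Theory.
Local Open Scope ring_scope.

(* A diagonal substitution x_i |-> c_i x_i with all c_i nonzero is an
   automorphism of the graded algebra O_{-1}(k^3): the skew sign of a product of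
   monomials does not see the scalars.  Since a differential obeying the Leibniz
   rule is determined by its values on the generators, the substitution carries
   the differential of matrix M to that of matrix N as soon as
   M_ij c_j^2 = c_i N_ij.  For the rank-one matrices at hand such c exist once
   square roots are available in k. *)

Section LinearMaps.
Variable k : fieldType.
Implicit Types (f g : {mpoly k[3]} -> {mpoly k[3]}) (p q : {mpoly k[3]}).

Lemma lin0 f : linear f -> f 0 = 0.
Proof.
move=> lf; have := lf 1 0 0; rewrite !scale1r addr0 => /esym/eqP.
by rewrite -subr_eq0 addrK => /eqP.
Qed.

Lemma linD f p q : linear f -> f (p + q) = f p + f q.
Proof. by move=> lf; have := lf 1 p q; rewrite !scale1r. Qed.

Lemma linZ f a p : linear f -> f (a *: p) = a *: f p.
Proof. by move=> lf; rewrite -[a *: p]addr0 lf lin0 // addr0. Qed.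

Lemma lin_sum f (I : Type) (r : seq I) (F : I -> {mpoly k[3]}) : linear f ->
  f (\sum_(i <- r) F i) = \sum_(i <- r) f (F i).
Proof.
move=> lf; elim: r => [|i r IH]; first by rewrite !big_nil lin0.
by rewrite !big_cons linD // IH.
Qed.

Lemma linear_comp f g : linear f -> linear g -> linear (f \o g).
Proof. by move=> lf lg a p q /=; rewrite lg lf. Qed.

Lemma linear_mpoly_eq f g : linear f -> linear g ->
  (forall m, f 'X_[m] = g 'X_[m]) -> f =1 g.
Proof.
move=> lf lg fg p; rewrite [p]mpolyE !lin_sum //.
by apply: eq_bigr => m _; rewrite !linZ // fg.
Qed.

End LinearMaps.

Section SkewProduct.
Variable k : fieldType.
Implicit Types (p q : {mpoly k[3]}) (m n : 'X_{1..3}) (s t : seq 'X_{1..3}).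

Lemma big_msupp_widen (V : nmodType) p s (F : 'X_{1..3} -> V) :
  uniq s -> {subset msupp p <= s} -> (forall m, p@_m = 0 -> F m = 0) ->
  \sum_(m <- msupp p) F m = \sum_(m <- s) F m.
Proof.
move=> us sub F0; rewrite [RHS](bigID (mem (msupp p))) /=.
rewrite [X in _ = _ + X]big1 ?addr0; last first.
  by move=> m; rewrite mcoeff_msupp negbK => /eqP /F0.
rewrite -[RHS]big_filter; apply: perm_big; apply: uniq_perm.
- exact: msupp_uniq.
- exact: filter_uniq.
by move=> m; rewrite mem_filter; case: (boolP (m \in msupp p)) => // /sub ->.
Qed.

Lemma skew_mul_widen p q s t : uniq s -> uniq t ->
  {subset msupp p <= s} -> {subset msupp q <= t} ->
  skew_mul p q = \sum_(m <- s) \sum_(n <- t)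
     (p@_m * q@_n * skew_sign k m n) *: 'X_[m + n].
Proof.
move=> us ut sp sq; rewrite /skew_mul (big_msupp_widen us sp); last first.
  by move=> m pm0; apply: big1 => n _; rewrite pm0 !mul0r scale0r.
apply: eq_bigr => m _; apply: big_msupp_widen => // n qn0.
by rewrite qn0 mulr0 mul0r scale0r.
Qed.

Lemma lincomb_msupp_cover a p p' : exists2 s, uniq s &
  [/\ {subset msupp p <= s}, {subset msupp p' <= s}
    & {subset msupp (a *: p + p') <= s}].
Proof.
exists (undup (msupp p ++ msupp p')); first exact: undup_uniq.
split=> m; rewrite mem_undup mem_cat; first by move->.
  by move->; rewrite orbT.
by move/msuppD_le; rewrite mem_cat => /orP[/msuppZ_le|] ->; rewrite ?orbT.
Qed.

Lemma skew_mul_linearl q : linear (fun p => skew_mul p q).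
Proof.
move=> a p p' /=; have [s us [sp sp' spp']] := lincomb_msupp_cover a p p'.
have sq : {subset msupp q <= msupp q} by [].
have uq := msupp_uniq q.
rewrite (skew_mul_widen us uq spp' sq) (skew_mul_widen us uq sp sq).
rewrite (skew_mul_widen us uq sp' sq) scaler_sumr -big_split.
apply: eq_bigr => m _; rewrite scaler_sumr -big_split; apply: eq_bigr => n _.
by rewrite mcoeffD mcoeffZ !mulrDl scalerDl scalerA !mulrA.
Qed.

Lemma skew_mul_linearr p : linear (skew_mul p).
Proof.
move=> a q q'; have [t ut [tq tq' tqq']] := lincomb_msupp_cover a q q'.
have sp : {subset msupp p <= msupp p} by [].
have up := msupp_uniq p.
rewrite (skew_mul_widen up ut sp tqq') (skew_mul_widen up ut sp tq).
rewrite (skew_mul_widen up ut sp tq') scaler_sumr -big_split.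
apply: eq_bigr => m _; rewrite scaler_sumr -big_split; apply: eq_bigr => n _.
by rewrite mcoeffD mcoeffZ mulrDr !mulrDl scalerDl scalerA mulrCA !mulrA.
Qed.

Lemma skew_mulX m n : skew_mul 'X_[m] 'X_[n] = skew_sign k m n *: 'X_[m + n].
Proof. by rewrite /skew_mul !msuppX !big_seq1 !mcoeffX !eqxx !mul1r. Qed.

Lemma skew_mul1r p : skew_mul 1 p = p.
Proof.
apply: (linear_mpoly_eq (skew_mul_linearr 1)) => // m.
by rewrite -mpolyX0 skew_mulX add0m /skew_sign !mnm0E !mul0n expr0 scale1r.
Qed.

Lemma skew_mulr1 p : skew_mul p 1 = p.
Proof.
apply: (linear_mpoly_eq (skew_mul_linearl 1)) => // m /=.
by rewrite -mpolyX0 skew_mulX addm0 /skew_sign !mnm0E !muln0 expr0 scale1r.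
Qed.

Lemma skew_mulZ a b p q : skew_mul (a *: p) (b *: q) = (a * b) *: skew_mul p q.
Proof.
rewrite (linZ _ _ (skew_mul_linearr _)) (linZ _ _ (skew_mul_linearl q)).
by rewrite scalerA mulrC.
Qed.

Lemma mpolyXU_skew i m :
  'X_[U_(i) + m] = skew_sign k U_(i) m *: skew_mul 'X_i 'X_[m].
Proof. by rewrite skew_mulX scalerA -expr2 sqrr_sign scale1r. Qed.

End SkewProduct.

Section Rescaling.
Variables (k : fieldType) (c : 'I_3 -> k).
Implicit Types (p q : {mpoly k[3]}) (m : 'X_{1..3}).

Definition rescale p : {mpoly k[3]} := p \mPo [tuple c i *: 'X_i | i < 3].

Lemma rescale_linear : linear rescale.
Proof. by move=> a p q; rewrite /rescale comp_mpolyD comp_mpolyZ. Qed.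

Lemma rescaleX m : rescale 'X_[m] = 'X_[m].@[c] *: 'X_[m].
Proof.
rewrite /rescale comp_mpolyX mevalX.
under eq_bigr => i _ do rewrite tnth_map tnth_ord_tuple exprZn.
by rewrite scaler_prod -mpolyXE_id.
Qed.

Lemma rescale1 : rescale 1 = 1.
Proof. exact: comp_mpoly1. Qed.

Lemma rescale_skew_mul p q :
  rescale (skew_mul p q) = skew_mul (rescale p) (rescale q).
Proof.
have Xmul m q' : rescale (skew_mul 'X_[m] q') = skew_mul (rescale 'X_[m]) (rescale q').
  apply: (linear_mpoly_eq (linear_comp rescale_linear (skew_mul_linearr _))
                          (linear_comp (skew_mul_linearr _) rescale_linear)) => n /=.
  rewrite skew_mulX linZ; last exact: rescale_linear.
  rewrite !rescaleX skew_mulZ skew_mulX !scalerA; congr (_ *: _).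
  by rewrite mpolyXD mevalM mulrC.
apply: (linear_mpoly_eq (linear_comp rescale_linear (skew_mul_linearl _))
                        (linear_comp (skew_mul_linearl _) rescale_linear)) p => m.
exact: Xmul.
Qed.

Lemma rescale_homog n p : p \is n.-homog -> rescale p \is n.-homog.
Proof.
move=> hp; have lin := rescale_linear.
rewrite [p]mpolyE lin_sum // big_seq; apply: rpred_sum => m pm.
by rewrite linZ // rescaleX !rpredZ // dhomogX (dhomog_mf hp).
Qed.

End Rescaling.

Lemma rescaleK (k : fieldType) (c c' : 'I_3 -> k) :
  (forall i, c i * c' i = 1) -> cancel (rescale c) (rescale c').
Proof.
move=> cc' p; have lin := rescale_linear.
apply: (@linear_mpoly_eq _ (rescale c' \o rescale c) id) => //= [|m].
  exact: linear_comp.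
rewrite rescaleX linZ // rescaleX scalerA !mevalX -big_split /=.
by rewrite big1 ?scale1r // => i _; rewrite -exprMn cc' expr1n.
Qed.

Lemma rescale_bij (k : fieldType) (c : 'I_3 -> k) :
  (forall i, c i != 0) -> bijective (rescale c).
Proof.
by move=> c_neq0; exists (rescale (fun i => (c i)^-1)); apply: rescaleK => i;
  rewrite ?mulfV ?mulVf.
Qed.

Lemma mdegS_split n (m : 'X_{1..n}) d : mdeg m = d.+1 ->
  exists i m', m = (U_(i) + m')%MM /\ mdeg m' = d.
Proof.
move=> mS; have [i m_i] : exists i, (0 < m i)%N.
  apply/existsP; apply: contraTT isT => /existsPn m0.
  suff : mdeg m = 0%N by rewrite mS.
  by rewrite mdegE big1 // => i _; apply/eqP; rewrite -leqn0 leqNgt m0.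
pose m' := [multinom (m j - (i == j))%N | j < n].
have Em : m = (U_(i) + m')%MM.
  apply/mnmP => j; rewrite mnmDE mnm1E mnmE.
  by case: eqP => [<-|_]; rewrite ?subnKC ?subn0.
by exists i, m'; split => //; move: mS; rewrite Em mdegD mdeg1 add1n => -[].
Qed.

Section Differentials.
Variable k : fieldType.
Implicit Types (M N : 'M[k]_3) (d e f : {mpoly k[3]} -> {mpoly k[3]}).

Lemma is_diff_linear M d : is_diff M d -> linear d.
Proof. by case. Qed.

Lemma is_diff1 M d : is_diff M d -> d 1 = 0.
Proof.
case=> _ _ leibniz; have := leibniz 0%N 1 1 (dhomog1 _ _).
rewrite !skew_mul1r !skew_mulr1 expr0 scale1r => /esym/eqP.
by rewrite -subr_eq0 addrK => /eqP.
Qed.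

Lemma intertwines_from_generators M N d e f :
  is_diff M d -> is_diff N e -> linear f -> f 1 = 1 ->
  (forall p q, f (skew_mul p q) = skew_mul (f p) (f q)) ->
  (forall i, f 'X_i \is 1.-homog) -> (forall i, f (d 'X_i) = e (f 'X_i)) ->
  forall p, f (d p) = e (f p).
Proof.
move=> dM eN lf f1 fM fX1 fdX; have ld := is_diff_linear dM.
have le := is_diff_linear eN.
have [_ _ d_leibniz] := dM; have [_ _ e_leibniz] := eN.
apply: linear_mpoly_eq; [exact: linear_comp | exact: linear_comp | move=> m /=].
move Dn: (mdeg m) => n; elim: n m Dn => [|n IH] m.
  move/eqP; rewrite mdeg_eq0 => /eqP ->.
  by rewrite mpolyX0 f1 (is_diff1 dM) (is_diff1 eN) lin0.
case/mdegS_split => i [m' [-> /IH fdX']]; rewrite mpolyXU_skew !linZ //.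
have X1 : ('X_i : {mpoly k[3]}) \is 1.-homog by rewrite dhomogX /= mdeg1.
rewrite (d_leibniz _ _ _ X1) fM (e_leibniz _ _ _ (fX1 i)).
by rewrite linD // linZ // !fM fdX fdX'.
Qed.

End Differentials.

Lemma rescale_diffX (k : fieldType) (M N : 'M[k]_3) d e c i :
  is_diff M d -> is_diff N e -> (forall j, M i j * c j ^+ 2 = c i * N i j) ->
  rescale c (d 'X_i) = e (rescale c 'X_i).
Proof.
case=> _ dX _ [le eX _] cMN; have lc := rescale_linear c.
rewrite dX rescaleX mevalXU linZ // eX lin_sum // scaler_sumr.
apply: eq_bigr => j _; rewrite linZ // expr2 -mpolyXD rescaleX mpolyXD mevalM.
by rewrite !mevalXU !scalerA -expr2 cMN.
Qed.

Lemma dg_isomorphic_rescale (k : fieldType) (M N : 'M[k]_3) (c : 'I_3 -> k) :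
  (forall i, c i != 0) -> (forall i j, M i j * c j ^+ 2 = c i * N i j) ->
  dg_isomorphic M N.
Proof.
move=> c_neq0 cMN d e dM eN; have X1 i : ('X_i : {mpoly k[3]}) \is 1.-homog.
  by rewrite dhomogX /= mdeg1.
exists (rescale c); split.
- by split; [exact: rescale_linear | exact: rescale_bij].
- exact: rescale_homog.
- exact: rescale1.
- exact: rescale_skew_mul.
apply: (intertwines_from_generators dM eN (rescale_linear c) (rescale1 c)
          (@rescale_skew_mul _ c)) => i.
- exact: rescale_homog.
- exact: rescale_diffX dM eN (cMN i).
Qed.

Lemma closed_sqrt (k : closedFieldType) (x : k) :
  x != 0 -> exists2 y : k, y != 0 & y ^+ 2 = x.
Proof.
move=> x_neq0; have [y y2] := @solve_monicpoly k 2 (nth 0 [:: x]) isT.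
have {}y2 : y ^+ 2 = x by rewrite y2 !big_ord_recl big_ord0 mul0r mulr1 !addr0.
by exists y => //; apply: contraNneq x_neq0 => y0; rewrite -y2 y0 expr0n.
Qed.

Lemma ord3_ind (P : 'I_3 -> Prop) :
  P sk_i0 -> P sk_i1 -> P sk_i2 -> forall i, P i.
Proof.
move=> P0 P1 P2 [[|[|[|i]]] lt_i3] //.
- by rewrite (_ : Ordinal _ = sk_i0) //; apply: val_inj.
- by rewrite (_ : Ordinal _ = sk_i1) //; apply: val_inj.
- by rewrite (_ : Ordinal _ = sk_i2) //; apply: val_inj.
Qed.

Section RankOneCases.
Variables (k : closedFieldType) (m12 m13 l2 : k).
Hypothesis l2_neq0 : l2 != 0.

Local Notation M :=
  (\matrix_(i < 3, j < 3) ([:: 1; 0; l2]`_i * [:: m13 * l2 ^+ 2; m12; m13]`_j)).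

Lemma dg_isomorphic_case_m12_m13 : m12 != 0 -> m13 != 0 ->
  dg_isomorphic M (Emx sk_i0 sk_i0 + Emx sk_i0 sk_i1 + Emx sk_i0 sk_i2
                   + Emx sk_i2 sk_i0 + Emx sk_i2 sk_i1 + Emx sk_i2 sk_i2).
Proof.
move=> m12_neq0 m13_neq0; set m11 := m13 * l2 ^+ 2.
have m11_neq0 : m11 != 0 by rewrite mulf_neq0 ?expf_neq0.
(* Rows 0 and 2 of [M i j * c j ^+ 2 = c i * N i j] say m1j c_j^2 = c_0 and
   c_2 = l2 c_0. *)
have [b b_neq0 b2] :=
  closed_sqrt (mulf_neq0 (invr_neq0 m11_neq0) (invr_neq0 m12_neq0)).
apply: (@dg_isomorphic_rescale _ _ _ (fun i => [:: m11^-1; b; m11^-1 * l2]`_i)).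
  by elim/ord3_ind; rewrite /= ?mulf_neq0 ?invr_neq0.
elim/ord3_ind; elim/ord3_ind; rewrite /Emx !mxE /= ?b2 /m11; field.
all: by rewrite ?l2_neq0 ?m12_neq0 ?m13_neq0.
Qed.

Lemma dg_isomorphic_case_m13 : m12 = 0 -> m13 != 0 ->
  dg_isomorphic M (Emx sk_i0 sk_i0 + Emx sk_i0 sk_i2 + Emx sk_i2 sk_i0 + Emx sk_i2 sk_i2).
Proof.
move=> m12_0 m13_neq0; set m11 := m13 * l2 ^+ 2.
have m11_neq0 : m11 != 0 by rewrite mulf_neq0 ?expf_neq0.
apply: (@dg_isomorphic_rescale _ _ _ (fun i => [:: m11^-1; 1; m11^-1 * l2]`_i)).
  by elim/ord3_ind; rewrite /= ?oner_neq0 ?mulf_neq0 ?invr_neq0.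
elim/ord3_ind; elim/ord3_ind; rewrite /Emx !mxE /= ?m12_0 /m11; field.
all: by rewrite ?l2_neq0 ?m13_neq0.
Qed.

Lemma dg_isomorphic_case_m12 : m12 != 0 -> m13 = 0 ->
  dg_isomorphic M (Emx sk_i0 sk_i1 + Emx sk_i2 sk_i1).
Proof.
move=> m12_neq0 m13_0; have [b b_neq0 b2] := closed_sqrt (invr_neq0 m12_neq0).
apply: (@dg_isomorphic_rescale _ _ _ (fun i => [:: 1; b; l2]`_i)).
  by elim/ord3_ind; rewrite /= ?oner_neq0.
elim/ord3_ind; elim/ord3_ind; rewrite /Emx !mxE /= ?m13_0 ?b2; field.
all: by rewrite ?m12_neq0.
Qed.

End RankOneCases.

Theorem lemma7p3 (k : closedFieldType) (hchar : [pchar k] =i pred0)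
    (m11 m12 m13 l1 l2 : k) :
  ~ [/\ m11 = 0, m12 = 0 & m13 = 0] ->
  m12 * l1 ^+ 2 + m13 * l2 ^+ 2 = m11 ->
  l1 = 0 -> l2 != 0 ->
  let M : 'M[k]_3 :=
    \matrix_(i < 3, j < 3) ([:: 1; l1; l2]`_i * [:: m11; m12; m13]`_j) in
  [/\ (m12 != 0 -> m13 != 0 ->
        dg_isomorphic M
          (Emx sk_i0 sk_i0 + Emx sk_i0 sk_i1 + Emx sk_i0 sk_i2
           + Emx sk_i2 sk_i0 + Emx sk_i2 sk_i1 + Emx sk_i2 sk_i2)),
      (m12 = 0 -> m13 != 0 ->
        dg_isomorphic M
          (Emx sk_i0 sk_i0 + Emx sk_i0 sk_i2 + Emx sk_i2 sk_i0 + Emx sk_i2 sk_i2)) &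
      (m12 != 0 -> m13 = 0 ->
        dg_isomorphic M (Emx sk_i0 sk_i1 + Emx sk_i2 sk_i1))].
Proof.
move=> _ Dm11 l1_0 l2_neq0 M; subst l1.
rewrite expr0n mulr0 add0r in Dm11; subst m11.
split.
- exact: dg_isomorphic_case_m12_m13.
- exact: dg_isomorphic_case_m13.
- exact: dg_isomorphic_case_m12.
Qed.
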